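(* Every nonempty relatively weakly open subset of the closed unit ball of Read's space $\mathcal R=(c_0,|||\cdot|||)$ has $|||\cdot|||$-diameter greater than or equal to $2/3$.
   Context: Let $c_{00}(\mathbb Q)$ be the set of finitely supported sequences with rational coefficients, and let $(u_n)_{n\in\mathbb N}$ be a sequence in $c_{00}(\mathbb Q)$ which lists every element of $c_{00}(\mathbb Q)$ infinitely many times. Let $(a_n)_{n\in\mathbb N}$ be a strictly increasing sequence of positive integers with $a_n>\max\operatorname{supp} u_n$ and $a_n>\|u_n\|_1$ for every $n$. $(e_n)$ denotes the canonical unit vectors and $\langle x,y\rangle=\sum_n x_ny_n$. Read's norm on $c_0$ is $|||x||| = \|x\|_\infty + \sum_{n} 2^{-a_n^2}|\langle x, u_n - e_{a_n}\rangle|$, and Read's space is $\mathcal R=(c_0,|||\cdot|||)$ (real scalars). *)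

From HB Require Import structures.
From mathcomp Require Import all_boot all_order all_algebra.
From mathcomp Require Import all_classical all_reals all_analysis.
Set Implicit Arguments. Unset Strict Implicit. Unset Printing Implicit Defensive.
Import Order.TTheory GRing.Theory Num.Theory.
Local Open Scope ring_scope.
Local Open Scope classical_set_scope.

Definition rseries {R : realType} (f : nat -> R) : R :=
  limn (fun n => \sum_(k < n) f k).

Definition finsupp (v : nat -> rat) : Prop :=
  exists N, forall k, (N <= k)%N -> v k = 0.

Definition c0 {R : realType} (x : nat -> R) : Prop := x @ \oo --> 0.

Definition pairing {R : realType} (x y : nat -> R) : R :=
  rseries (fun k => x k * y k).

Definition supnorm {R : realType} (x : nat -> R) : R :=
  sup (range (fun k => `|x k|)).

Definition unitvec {R : realType} (m : nat) : nat -> R :=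
  fun k => (k == m)%:R.

Definition read_norm {R : realType} (u : nat -> nat -> rat) (a : nat -> nat)
    (x : nat -> R) : R :=
  supnorm x + rseries (fun n =>
     (2 : R) ^- ((a n) ^ 2)%N *
     `| pairing x (fun k => ratr (u n k) - unitvec (a n) k) |).

Definition read_data (u : nat -> nat -> rat) (a : nat -> nat) : Prop :=
  [/\ (forall n, finsupp (u n)),
      (* every element of c_00(Q) is listed infinitely many times *)
      (forall v, finsupp v -> forall N, exists2 n, (N <= n)%N & u n = v),
      (forall m n, (m < n)%N -> (a m < a n)%N) /\ (forall n, (0 < a n)%N),
      (forall n k, u n k != 0 -> (k < a n)%N)
    & (* a_n > ||u_n||_1  (the support of u_n lies in [0, a_n)) *)
      (forall n, \sum_(k < a n) `|u n k| < (a n)%:R)].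

(* continuous (= bounded) linear functionals on (c_0, |||.|||) *)
Definition read_dual {R : realType} (u : nat -> nat -> rat) (a : nat -> nat)
    (f : (nat -> R) -> R) : Prop :=
  (forall (c : R) x y, c0 x -> c0 y ->
      f (fun k => c * x k + y k) = c * f x + f y) /\
  exists C : R, forall x, c0 x -> `|f x| <= C * read_norm u a x.

Definition read_ball {R : realType} (u : nat -> nat -> rat) (a : nat -> nat) :
    set (nat -> R) :=
  [set x | c0 x /\ read_norm u a x <= 1].

Definition rel_weakly_open_in_ball {R : realType} (u : nat -> nat -> rat)
    (a : nat -> nat) (W : set (nat -> R)) : Prop :=
  W `<=` read_ball u a /\
  forall x, W x -> exists (m : nat) (fs : 'I_m -> (nat -> R) -> R) (e : R),
    [/\ 0 < e, (forall i, read_dual u a (fs i)) &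
        forall y, read_ball u a y ->
          (forall i, `|fs i y - fs i x| < e) -> W y].

Definition read_diam {R : realType} (u : nat -> nat -> rat) (a : nat -> nat)
    (W : set (nat -> R)) : R :=
  sup [set d | exists x y, [/\ W x, W y & d = read_norm u a (fun k => x k - y k)]].

(* Let x be in W: then W contains every point y of the unit ball with
   |f_i y - f_i x| < e for finitely many bounded functionals f_1, ..., f_m.
   Write |||w||| = ||w||_oo + S w, where S is the weighted series.  Since the
   weights 2^(-a_n^2) decay so fast, S w <= 4/3 ||w||_oo, hence S x <= 4/7 on
   the unit ball, and S w <= 4 2^(-N) ||w||_oo when w vanishes below N.  Some
   nontrivial combination z of e_N, ..., e_(N+m), normalised to
   ||z||_oo = 1, is annihilated by every f_i.  For N large and d small, the
   points (1 - d) x +/- t z with t = 1 - S x - 2/21 stay in the unit ball and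
   in W, and their distance is at least 2 t ||z||_oo >= 2/3. *)

From HB Require Import structures.
From mathcomp Require Import all_boot all_order all_algebra.
From mathcomp Require Import all_classical all_reals all_analysis.
From mathcomp Require Import zify ring lra.
Set Implicit Arguments. Unset Strict Implicit. Unset Printing Implicit Defensive.
Import Order.TTheory GRing.Theory Num.Theory.
Local Open Scope ring_scope.
Local Open Scope classical_set_scope.

Section NonnegSeries.
Variables (R : realType) (f : nat -> R) (B : R).
Hypothesis f_ge0 : forall n, 0 <= f n.
Hypothesis partial_le : forall K, \sum_(k < K) f k <= B.

Let partial_nondecreasing : nondecreasing_seq (fun n => \sum_(k < n) f k).
Proof. by apply/nondecreasing_seqP => n; rewrite big_ord_recr /= lerDl. Qed.

Let partial_cvg : cvgn (fun n => \sum_(k < n) f k).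
Proof.
apply: nondecreasing_is_cvgn => //.
by exists B => _ [n _ <-]; exact: partial_le.
Qed.

Lemma partial_le_rseries K : \sum_(k < K) f k <= rseries f.
Proof. exact: nondecreasing_cvgn_le. Qed.

Lemma rseries_ge0 : 0 <= rseries f.
Proof. by apply: le_trans (partial_le_rseries 0); rewrite big_ord0. Qed.

Lemma rseries_le : rseries f <= B.
Proof. by apply: limr_le => //; apply: nearW. Qed.

End NonnegSeries.

Lemma rseries_finite (R : realType) (f : nat -> R) K :
  (forall k, (K <= k)%N -> f k = 0) -> rseries f = \sum_(k < K) f k.
Proof.
move=> f_eq0.
suff : (fun n => \sum_(k < n) f k) @ \oo --> \sum_(k < K) f k by move/cvg_lim; apply.
apply: cvg_near_cst; near=> n.
have /subnKC <- : (K <= n)%N by near: n; exists K.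
rewrite big_split_ord /= [X in _ + X]big1 ?addr0 // => i _.
by rewrite f_eq0 // leq_addr.
Unshelve. all: by end_near. Qed.

Lemma sum_expS_le (R : realType) (q : R) K :
  0 < q < 1 -> \sum_(k < K) q ^+ k.+1 <= q / (1 - q).
Proof.
case/andP=> q_gt0 q_lt1.
have q_norm_lt1 : `|q| < 1 by rewrite gtr0_norm.
have := geometric_le_lim K (ltW q_gt0) q_gt0 q_norm_lt1.
apply: le_trans; rewrite /series /= big_mkord.
by under [leLHS]eq_bigr do rewrite exprS.
Qed.

Lemma exists_small_scalar (R : realFieldType) m (v : 'I_m -> R) (e eta : R) :
  0 < e -> 0 < eta -> exists2 dl, 0 < dl <= eta & forall i, dl * `|v i| < e.
Proof.
move=> e_gt0 eta_gt0; pose C := \sum_i `|v i|.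
have C_ge0 : 0 <= C by rewrite sumr_ge0.
exists (Num.min eta (e / (C + 1))) => [|i].
  by rewrite lt_min eta_gt0 divr_gt0 ?ltr_wpDl //= ge_min lexx.
have v_le : `|v i| <= C by rewrite /C (bigD1 i) //= lerDl sumr_ge0.
apply: (@le_lt_trans _ _ (e / (C + 1) * C)).
  by rewrite ler_pM ?ge_min ?lexx ?orbT // ltW // lt_min eta_gt0 divr_gt0 ?ltr_wpDl.
by rewrite mulrAC ltr_pdivrMr ?ltr_wpDl // ltr_pM2l //; lra.
Qed.

Section Supnorm.
Variables (R : realType) (x : nat -> R).

Lemma supnorm_le B : (forall k, `|x k| <= B) -> supnorm x <= B.
Proof.
move=> x_le; apply: ge_sup; first by exists `|x 0%N|, 0%N.
by move=> _ [k _ <-]; exact: x_le.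
Qed.

Lemma le_supnorm B : (forall k, `|x k| <= B) -> forall k, `|x k| <= supnorm x.
Proof.
move=> x_le k; apply: ub_le_sup; last by exists k.
by exists B => _ [j _ <-]; exact: x_le.
Qed.

End Supnorm.

Section C0.
Variable R : realType.
Implicit Types x y : nat -> R.

Lemma c0_eventually_le x e : c0 x -> 0 < e ->
  exists N, forall k, (N <= k)%N -> `|x k| <= e.
Proof. by move=> x_c0 e_gt0; have [N _ xN] := cvgr0_norm_le x x_c0 e e_gt0; exists N. Qed.

Lemma c0_bounded x : c0 x -> exists B, forall k, `|x k| <= B.
Proof.
move=> x_c0; have [N xN] := c0_eventually_le x_c0 ltr01.
exists (1 + \sum_(j < N) `|x j|) => k.
have [kN|Nk] := ltnP k N.
  by rewrite (bigD1 (Ordinal kN)) //= addrCA lerDl addr_ge0 ?sumr_ge0.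
by apply: le_trans (xN _ Nk) _; rewrite lerDl sumr_ge0.
Qed.

Lemma c0_le_supnorm x : c0 x -> forall k, `|x k| <= supnorm x.
Proof. by case/c0_bounded => B; exact: le_supnorm. Qed.

Lemma c0_lincomb c d x y : c0 x -> c0 y -> c0 (fun k => c * x k + d * y k).
Proof.
rewrite /c0 => x_c0 y_c0.
have -> : (0 : R) = c * 0 + d * 0 by rewrite !mulr0 addr0.
by apply: cvgD; apply: cvgMl_tmp.
Qed.

Lemma c0_finite_support x K : (forall k, (K <= k)%N -> x k = 0) -> c0 x.
Proof. by move=> x_eq0; apply: (@cvg_near_cst _ _ 0 x \oo); exists K. Qed.

Lemma c0_unitvec m : c0 (@unitvec R m).
Proof. by apply: (@c0_finite_support _ m.+1) => k mk; rewrite /unitvec gtn_eqF. Qed.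

Lemma c0_sum (I : Type) (s : seq I) (d : I -> R) (g : I -> nat -> R) :
  (forall j, c0 (g j)) -> c0 (fun k => \sum_(j <- s) d j * g j k).
Proof.
move=> g_c0; elim: s => [|j s IHs].
  by apply: (@c0_finite_support _ 0) => k _; rewrite big_nil.
have := c0_lincomb (d j) 1 (g_c0 j) IHs.
by congr c0; apply: funext => k; rewrite big_cons mul1r.
Qed.

Lemma exists_tail_index x (eta dl : R) : c0 x -> 0 < eta -> 0 < dl ->
  exists2 N, (forall k, (N <= k)%N -> `|x k| <= eta) & 4 * 2^-1 ^+ N <= dl.
Proof.
move=> x_c0 eta_gt0 dl_gt0; have [N1 x_N1] := c0_eventually_le x_c0 eta_gt0.
have h_c0 : c0 (fun n => 2^-1 ^+ n : R).
  by apply: cvg_expr; rewrite ger0_norm ?invr_ge0 // invf_lt1 ?ltr1n.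
have [N2 h_N2] := c0_eventually_le h_c0 (divr_gt0 dl_gt0 (ltr0n R 4)).
exists (maxn N1 N2) => [k|]; first by rewrite geq_max => /andP[/x_N1].
by have := h_N2 _ (leq_maxr N1 N2); rewrite ger0_norm ?exprn_ge0 ?invr_ge0 //; lra.
Qed.

End C0.

Definition c0_linear (R : realType) (f : (nat -> R) -> R) : Prop :=
  forall (c : R) x y, c0 x -> c0 y -> f (fun k => c * x k + y k) = c * f x + f y.

Section C0Linear.
Variables (R : realType) (f : (nat -> R) -> R).
Hypothesis f_linear : c0_linear f.

Lemma c0_linear0 : f (fun=> 0) = 0.
Proof.
have c0_0 : c0 (fun=> 0 : R) by apply: (@c0_finite_support _ _ 0).
have := f_linear 1 c0_0 c0_0; rewrite !mul1r addr0; lra.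
Qed.

Lemma c0_linear_lincomb c d x y : c0 x -> c0 y ->
  f (fun k => c * x k + d * y k) = c * f x + d * f y.
Proof.
move=> x_c0 y_c0.
have dy_c0 : c0 (fun k => d * y k).
  by have := c0_lincomb d 0 y_c0 y_c0; under eq_fun do rewrite mul0r addr0.
rewrite f_linear //; congr (_ + _).
have := f_linear d y_c0 (@c0_finite_support _ (fun=> 0) 0 (fun _ _ => erefl)).
by rewrite c0_linear0 addr0; under eq_fun do rewrite addr0.
Qed.

Lemma c0_linear_sum (I : Type) (s : seq I) (d : I -> R) (g : I -> nat -> R) :
  (forall j, c0 (g j)) ->
  f (fun k => \sum_(j <- s) d j * g j k) = \sum_(j <- s) d j * f (g j).
Proof.
move=> g_c0; elim: s => [|j s IHs].
  by under eq_fun do rewrite big_nil; rewrite big_nil c0_linear0.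
under eq_fun do rewrite big_cons -[X in _ + X]mul1r.
rewrite c0_linear_lincomb //; last exact: c0_sum.
by rewrite mul1r IHs big_cons.
Qed.

End C0Linear.

Section BlockVector.
Variables (R : realType) (N n : nat) (c : 'I_n -> R).

Definition block_vec : nat -> R := fun k => \sum_(j < n) c j * unitvec (N + j) k.

Lemma block_vec_lt k : (k < N)%N -> block_vec k = 0.
Proof.
move=> kN; apply: big1 => j _.
by rewrite /unitvec ltn_eqF ?mulr0 // (leq_trans kN) ?leq_addr.
Qed.

Lemma block_vec_ge k : (N + n <= k)%N -> block_vec k = 0.
Proof.
move=> Nnk; apply: big1 => j _.
by rewrite /unitvec gtn_eqF ?mulr0 // (leq_trans _ Nnk) // ltn_add2l.
Qed.

Lemma block_vecE (j : 'I_n) : block_vec (N + j) = c j.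
Proof.
rewrite /block_vec (bigD1 j) //= big1 ?addr0 => [|i ij].
  by rewrite /unitvec eqxx mulr1.
by rewrite /unitvec eqn_add2l val_eqE eq_sym (negbTE ij) mulr0.
Qed.

Lemma block_vec_norm_le B : 0 <= B -> (forall j, `|c j| <= B) ->
  forall k, `|block_vec k| <= B.
Proof.
move=> B_ge0 cB k; have [kN|Nk] := ltnP k N; first by rewrite block_vec_lt ?normr0.
have [kn|nk] := ltnP (k - N) n; last by rewrite block_vec_ge ?normr0 // -leq_subRL.
by rewrite -(subnKC Nk) (block_vecE (Ordinal kn)).
Qed.

Lemma c0_block_vec : c0 block_vec.
Proof. exact: (c0_finite_support block_vec_ge). Qed.

Lemma c0_linear_block_vec f : c0_linear f ->
  f block_vec = \sum_(j < n) c j * f (unitvec (N + j)).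
Proof. by move=> f_linear; rewrite (c0_linear_sum f_linear) // => j; exact: c0_unitvec. Qed.

End BlockVector.

Lemma exists_nonzero_kernel_row (R : fieldType) m (A : 'M[R]_(m.+1, m)) :
  exists2 c : 'rV[R]_(m.+1), c != 0 & c *m A = 0.
Proof.
have : kermx A != 0.
  by rewrite -mxrank_eq0 -lt0n mxrank_ker subn_gt0 ltnS rank_leq_col.
case: (pickP (fun i => row i (kermx A) != 0)) => [i Ki _|K0].
  by exists (row i (kermx A)); rewrite // -row_mul mulmx_ker row0.
case/negP; apply/eqP/row_matrixP => i.
by move: (K0 i) => /negbFE/eqP ->; rewrite row0.
Qed.

Lemma exists_normalized_kernel_row (R : realFieldType) m (A : 'M[R]_(m.+1, m)) :
  exists c : 'rV[R]_(m.+1),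
    [/\ c *m A = 0, forall j, `|c 0 j| <= 1 & exists j, `|c 0 j| = 1].
Proof.
have [c c_neq0 cA] := exists_nonzero_kernel_row A.
pose j0 := [arg max_(j > ord0) `|c 0 j|]%O.
have c_le : forall j, `|c 0 j| <= `|c 0 j0|.
  by rewrite /j0; case: arg_maxP => // j _ jmax k; exact: jmax.
have c_j0_gt0 : 0 < `|c 0 j0|.
  rewrite normr_gt0; apply: contraNneq c_neq0 => c_j0.
  apply/eqP/rowP => j; rewrite mxE; apply/eqP; rewrite -normr_le0.
  by rewrite -(normr0 R) -c_j0 c_le.
exists (`|c 0 j0|^-1 *: c); split.
- by rewrite -scalemxAl cA scaler0.
- by move=> j; rewrite mxE normrM normfV normr_id ler_pdivrMl // mulr1.
- by exists j0; rewrite mxE normrM normfV normr_id mulVf // gt_eqF.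
Qed.

Lemma exists_annihilated_block (R : realType) m (fs : 'I_m -> (nat -> R) -> R) N :
  (forall i, c0_linear (fs i)) ->
  exists z : nat -> R, [/\ c0 z, forall k, (k < N)%N -> z k = 0,
    forall k, `|z k| <= 1, exists k, `|z k| = 1 & forall i, fs i z = 0].
Proof.
move=> fs_linear; pose A := \matrix_(j < m.+1, i < m) fs i (unitvec (N + j)).
have [c [cA c_le1 [j cj]]] := exists_normalized_kernel_row A.
exists (block_vec N (c 0)); split.
- exact: c0_block_vec.
- exact: block_vec_lt.
- exact: block_vec_norm_le.
- by exists (N + j)%N; rewrite block_vecE.
- move=> i; rewrite c0_linear_block_vec //.
  transitivity ((c *m A) 0 i); last by rewrite cA mxE.
  by rewrite mxE; apply: eq_bigr => k _; rewrite mxE.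
Qed.

Lemma exp2_sqrN_mulSn_le (R : realFieldType) (m : nat) :
  (2 : R) ^- (m ^ 2)%N * m.+1%:R <= 4 * 2^-1 ^+ (m + m).
Proof.
have nat_le : (m.+1 * 2 ^ (m + m) <= 4 * 2 ^ (m ^ 2))%N.
  apply: (@leq_trans (2 ^ m * 2 ^ (m + m))); first by rewrite leq_mul2r ltn_expl ?orbT.
  rewrite -expnD (_ : 4 = 2 ^ 2)%N // -expnD leq_exp2l //.
  by rewrite -mulnn; case: m => [|[|[|m]]] //; nia.
rewrite -(ler_nat R) !natrM !natrX in nat_le.
by rewrite exprVn mulrC ler_pdivrMr ?exprn_gt0 // mulrAC ler_pdivlMr ?exprn_gt0.
Qed.

Section ReadNorm.
Variables (R : realType) (u : nat -> nat -> rat) (a : nat -> nat).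
Hypothesis a_gt : forall n, (n < a n)%N.
Hypothesis u_supp : forall n k, u n k != 0 -> (k < a n)%N.
Hypothesis u_l1 : forall n, \sum_(k < a n) `|u n k| < (a n)%:R.
Implicit Types (w x y z : nat -> R) (B C c d : R).

Definition read_vec n k : R := ratr (u n k) - unitvec (a n) k.

Definition read_term n (w : nat -> R) : R :=
  2 ^- (a n ^ 2)%N * `|pairing w (read_vec n)|.

Definition read_series (w : nat -> R) : R := rseries (read_term^~ w).

Lemma read_normE w : read_norm u a w = supnorm w + read_series w.
Proof. by []. Qed.

Lemma u_supp_eq0 n k : (a n <= k)%N -> u n k = 0.
Proof. by move=> ank; apply/eqP; apply: contraTT ank => /u_supp; rewrite -ltnNge. Qed.

Lemma read_vec_eq0 n k : (a n < k)%N -> read_vec n k = 0.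
Proof.
by move=> ank; rewrite /read_vec (u_supp_eq0 (ltnW ank)) rmorph0 /unitvec gtn_eqF // subr0.
Qed.

Lemma pairing_read_vec n w :
  pairing w (read_vec n) = \sum_(k < (a n).+1) w k * read_vec n k.
Proof. by rewrite /pairing (rseries_finite (K := (a n).+1)) // => k /read_vec_eq0 ->; rewrite mulr0. Qed.

Lemma sum_norm_read_vec n : \sum_(k < (a n).+1) `|read_vec n k| <= (a n).+1%:R.
Proof.
rewrite big_ord_recr /= /read_vec u_supp_eq0 // rmorph0 /unitvec eqxx sub0r normrN normr1.
rewrite -natr1 lerD2r.
have u_le := ltW (u_l1 n); rewrite -(ler_rat R) rmorph_sum ratr_nat in u_le.
apply: le_trans u_le; apply: ler_sum => i _.
by rewrite /unitvec ltn_eqF // subr0 -ratr_norm.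
Qed.

Lemma norm_pairing_read_vec_le n w B : (forall k, `|w k| <= B) ->
  `|pairing w (read_vec n)| <= B * (a n).+1%:R.
Proof.
move=> wB; have B_ge0 := le_trans (normr_ge0 _) (wB 0%N).
rewrite pairing_read_vec (le_trans (ler_norm_sum _ _ _)) //.
rewrite (le_trans _ (ler_wpM2l B_ge0 (sum_norm_read_vec n))) // mulr_sumr.
by apply: ler_sum => k _; rewrite normrM ler_wpM2r.
Qed.

Lemma pairing_read_vec_eq0 n w N : (forall k, (k < N)%N -> w k = 0) ->
  (a n < N)%N -> pairing w (read_vec n) = 0.
Proof.
move=> w_eq0 anN; rewrite pairing_read_vec big1 // => k _.
by rewrite w_eq0 ?mul0r // (leq_trans _ anN).
Qed.

Lemma pairing_read_vec_lincomb n c d x z :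
  pairing (fun k => c * x k + d * z k) (read_vec n) =
  c * pairing x (read_vec n) + d * pairing z (read_vec n).
Proof.
rewrite !pairing_read_vec !mulr_sumr -big_split /=.
by apply: eq_bigr => k _; rewrite mulrDl !mulrA.
Qed.

Lemma read_term_ge0 n w : 0 <= read_term n w.
Proof. by rewrite mulr_ge0 ?invr_ge0 ?exprn_ge0. Qed.

Lemma read_term_lincomb_le n c d x z : 0 <= c ->
  read_term n (fun k => c * x k + d * z k) <= c * read_term n x + `|d| * read_term n z.
Proof.
move=> c_ge0; rewrite /read_term pairing_read_vec_lincomb mulrCA (mulrCA `|d|) -mulrDr.
rewrite ler_wpM2l ?invr_ge0 ?exprn_ge0 // (le_trans (ler_normD _ _)) //.
by rewrite !normrM (ger0_norm c_ge0).
Qed.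

Lemma read_term_le n w B : (forall k, `|w k| <= B) ->
  read_term n w <= 4 * B * 2^-1 ^+ (a n + a n).
Proof.
move=> wB; have B_ge0 := le_trans (normr_ge0 _) (wB 0%N); rewrite /read_term.
rewrite (le_trans (ler_wpM2l _ (norm_pairing_read_vec_le n wB))) ?invr_ge0 ?exprn_ge0 //.
by rewrite mulrCA (mulrC 4) -mulrA ler_wpM2l // exp2_sqrN_mulSn_le.
Qed.

Lemma read_partial_le w B : (forall k, `|w k| <= B) ->
  forall K, \sum_(n < K) read_term n w <= 4 * B / 3.
Proof.
move=> wB K; have B_ge0 := le_trans (normr_ge0 _) (wB 0%N); pose q : R := 2^-1 ^+ 2.
apply: (@le_trans _ _ (4 * B * \sum_(n < K) q ^+ n.+1)).
  rewrite mulr_sumr; apply: ler_sum => n _; rewrite (le_trans (read_term_le n wB)) //.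
  apply: ler_wpM2l; first exact: mulr_ge0.
  rewrite /q -exprM ler_wiXn2l ?invr_ge0 ?invf_le1 ?ler1n //.
  by have := a_gt n; lia.
have q_gt0 : 0 < q < 1 by rewrite /q; apply/andP; split; lra.
apply: ler_wpM2l; first exact: mulr_ge0.
have q_div : q / (1 - q) = 3^-1 by rewrite /q; field.
by rewrite (le_trans (sum_expS_le K q_gt0)) // q_div.
Qed.

Lemma read_partial_tail_le w B N : (forall k, `|w k| <= B) ->
  (forall k, (k < N)%N -> w k = 0) ->
  forall K, \sum_(n < K) read_term n w <= 4 * B * 2^-1 ^+ N.
Proof.
move=> wB w_eq0 K; have B_ge0 := le_trans (normr_ge0 _) (wB 0%N); pose h : R := 2^-1.
have h_gt0 : 0 < h < 1 by rewrite /h; apply/andP; split; lra.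
have h_ge0 : 0 <= h by rewrite /h invr_ge0.
apply: (@le_trans _ _ (4 * B * h ^+ N * \sum_(n < K) h ^+ n.+1)); last first.
  have h_div : h / (1 - h) = 1 by rewrite /h; field.
  have h_sum := sum_expS_le K h_gt0; rewrite h_div in h_sum.
  by rewrite ler_piMr // !mulr_ge0 ?exprn_ge0.
rewrite mulr_sumr; apply: ler_sum => n _.
have [anN|Nan] := ltnP (a n) N.
  by rewrite /read_term (pairing_read_vec_eq0 w_eq0 anN) normr0 mulr0 !mulr_ge0 ?exprn_ge0.
rewrite (le_trans (read_term_le n wB)) // /h -[leRHS]mulrA -exprD.
apply: ler_wpM2l; first exact: mulr_ge0.
rewrite ler_wiXn2l ?invr_ge0 ?invf_le1 ?ler1n //.
by have := a_gt n; lia.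
Qed.

Section BoundedVector.
Variables (w : nat -> R) (B : R).
Hypothesis wB : forall k, `|w k| <= B.

Lemma partial_le_read_series K : \sum_(n < K) read_term n w <= read_series w.
Proof. exact: (partial_le_rseries (B := 4 * B / 3) (read_term_ge0^~ w) (read_partial_le wB)). Qed.

Lemma read_series_ge0 : 0 <= read_series w.
Proof. exact: (rseries_ge0 (B := 4 * B / 3) (read_term_ge0^~ w) (read_partial_le wB)). Qed.

Lemma read_series_le : read_series w <= 4 * B / 3.
Proof. exact: (rseries_le (read_term_ge0^~ w) (read_partial_le wB)). Qed.

Lemma le_read_norm k : `|w k| <= read_norm u a w.
Proof. by rewrite read_normE (le_trans (le_supnorm wB k)) // lerDl read_series_ge0. Qed.

Lemma read_norm_le : read_norm u a w <= B + 4 * B / 3.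
Proof. by rewrite read_normE lerD ?supnorm_le ?read_series_le. Qed.

End BoundedVector.

Lemma read_series_lincomb_le c d x z Bx C : 0 <= c -> (forall k, `|x k| <= Bx) ->
  (forall K, \sum_(n < K) read_term n z <= C) ->
  read_series (fun k => c * x k + d * z k) <= c * read_series x + `|d| * C.
Proof.
move=> c_ge0 xB zC; apply: rseries_le => [n|K]; first exact: read_term_ge0.
apply: (@le_trans _ _ (\sum_(n < K) (c * read_term n x + `|d| * read_term n z))).
  by apply: ler_sum => n _; exact: read_term_lincomb_le.
rewrite big_split /= -!mulr_sumr.
apply: lerD; apply: ler_wpM2l => //; [exact: (partial_le_read_series xB) | exact: zC].
Qed.

Section ReadBall.
Variable x : nat -> R.
Hypothesis x_ball : read_ball u a x.

Let x_le_supnorm : forall k, `|x k| <= supnorm x := c0_le_supnorm x_ball.1.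

Lemma read_ball_abs_le k : `|x k| <= 1 - read_series x.
Proof. by rewrite lerBrDr (le_trans _ x_ball.2) // read_normE lerD2r. Qed.

Lemma read_ball_abs_le1 k : `|x k| <= 1.
Proof.
by rewrite (le_trans (read_ball_abs_le k)) // gerBl (read_series_ge0 x_le_supnorm).
Qed.

Lemma read_ball_series_le : read_series x <= 4 / 7.
Proof.
have := read_series_le x_le_supnorm; have := x_ball.2.
by rewrite read_normE; lra.
Qed.

End ReadBall.

Lemma read_norm_perturb_le x z (e dl s : R) N :
  read_ball u a x -> 0 < dl <= e ->
  (forall k, (N <= k)%N -> `|x k| <= e) ->
  (forall k, (k < N)%N -> z k = 0) -> (forall k, `|z k| <= 1) ->
  4 * 2^-1 ^+ N <= dl -> `|s| <= 1 - read_series x - 2 * e ->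
  read_norm u a (fun k => (1 - dl) * x k + s * z k) <= 1.
Proof.
move=> x_ball /andP[dl_gt0 dl_le_e] x_tail z_eq0 z_le1 hN_le s_le.
have x_le := read_ball_abs_le x_ball.
have S_ge0 := read_series_ge0 (c0_le_supnorm x_ball.1).
set S := read_series x in x_le S_ge0 s_le *.
have dl_le1 : dl <= 1 by have := normr_ge0 s; lra.
have dlS_ge0 : 0 <= dl * S by rewrite mulr_ge0 // ltW.
have sup_le : supnorm (fun k => (1 - dl) * x k + s * z k) <= 1 - (1 - dl) * S - dl.
  apply: supnorm_le => k; have [kN|Nk] := ltnP k N.
    rewrite z_eq0 // mulr0 addr0 normrM ger0_norm ?subr_ge0 //.
    by rewrite (le_trans (ler_wpM2l _ (x_le k))) ?subr_ge0 //; lra.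
  have dlx_ge0 : 0 <= dl * `|x k| by rewrite mulr_ge0 // ltW.
  have sz_le : `|s| * `|z k| <= `|s| by rewrite ler_piMr.
  rewrite (le_trans (ler_normD _ _)) // !normrM ger0_norm ?subr_ge0 //.
  by have := x_tail k Nk; lra.
have series_le : read_series (fun k => (1 - dl) * x k + s * z k) <= (1 - dl) * S + dl.
  rewrite (le_trans (read_series_lincomb_le s (Bx := 1) _ (read_ball_abs_le1 x_ball)
    (read_partial_tail_le z_le1 z_eq0))) ?subr_ge0 //.
  have s_le1 : `|s| <= 1 by lra.
  rewrite lerD2l mulr1 (le_trans _ hN_le) // ler_piMl ?mulr_ge0 ?exprn_ge0 ?invr_ge0 //.
by rewrite read_normE; lra.
Qed.

Lemma read_ball_sub_abs_le x y : read_ball u a x -> read_ball u a y ->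
  forall k, `|x k - y k| <= 2.
Proof.
move=> x_ball y_ball k; have := read_ball_abs_le1 x_ball k.
by have := read_ball_abs_le1 y_ball k; have := ler_normB (x k) (y k); lra.
Qed.

Lemma read_dist_le_diam (W : set (nat -> R)) x y : W `<=` read_ball u a ->
  W x -> W y -> read_norm u a (fun k => x k - y k) <= read_diam u a W.
Proof.
move=> W_ball Wx Wy; apply: ub_le_sup; last by exists x, y.
exists (2 + 4 * 2 / 3) => _ [x' [y' [Wx' Wy' ->]]].
exact/read_norm_le/read_ball_sub_abs_le/W_ball/Wy'/W_ball/Wx'.
Qed.

Theorem read_diam_weakly_open_ge (W : set (nat -> R)) :
  rel_weakly_open_in_ball u a W -> W !=set0 -> 2 / 3 <= read_diam u a W.
Proof.
move=> [W_ball W_open] [x Wx]; have x_ball := W_ball x Wx.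
have [m [fs [e [e_gt0 fs_dual x_nbhd]]]] := W_open x Wx.
pose eta : R := 21^-1; have eta_gt0 : 0 < eta by rewrite /eta; lra.
have [dl /andP[dl_gt0 dl_le] fs_dl] := exists_small_scalar (fun i => fs i x) e_gt0 eta_gt0.
have [N x_tail hN_le] := exists_tail_index x_ball.1 eta_gt0 dl_gt0.
have [z [z_c0 z_eq0 z_le1 [k zk] fs_z]] :=
  exists_annihilated_block N (fun i => (fs_dual i).1).
pose t := 1 - read_series x - 2 * eta.
(* [1 - 4/7 - 2/21 = 1/3] *)
have t_ge : 1 / 3 <= t by have := read_ball_series_le x_ball; rewrite /t /eta; lra.
have W_perturb s : `|s| <= t -> W (fun k => (1 - dl) * x k + s * z k).
  move=> s_le; apply: x_nbhd => [|i].
    split; first exact: c0_lincomb x_ball.1 z_c0.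
    by apply: read_norm_perturb_le x_ball _ x_tail z_eq0 z_le1 hN_le s_le; rewrite dl_gt0.
  rewrite (c0_linear_lincomb (fs_dual i).1 _ _ x_ball.1 z_c0) fs_z mulr0 addr0.
  have -> : (1 - dl) * fs i x - fs i x = - (dl * fs i x) by ring.
  by rewrite normrN normrM gtr0_norm.
have t_ge0 : 0 <= t by lra.
have Wt : W (fun k => (1 - dl) * x k + t * z k) by apply: W_perturb; rewrite ger0_norm.
have Wmt : W (fun k => (1 - dl) * x k + - t * z k).
  by apply: W_perturb; rewrite normrN ger0_norm.
apply: (le_trans _ (read_dist_le_diam W_ball Wt Wmt)).
apply: (le_trans _ (le_read_norm (read_ball_sub_abs_le (W_ball _ Wt) (W_ball _ Wmt)) k)).
have -> : (1 - dl) * x k + t * z k - ((1 - dl) * x k + - t * z k) = (t + t) * z k by ring.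
by rewrite normrM zk mulr1 ger0_norm; lra.
Qed.

End ReadNorm.

Lemma ltn_increasing_pos (a : nat -> nat) :
  (forall m n, (m < n)%N -> (a m < a n)%N) -> (forall n, (0 < a n)%N) ->
  forall n, (n < a n)%N.
Proof.
move=> a_incr a_gt0; elim=> [|n IHn]; first exact: a_gt0.
exact: leq_ltn_trans IHn (a_incr _ _ (ltnSn n)).
Qed.

Theorem corollary2p8 (R : realType) (u : nat -> nat -> rat) (a : nat -> nat)
    (W : set (nat -> R)) :
  read_data u a ->
  rel_weakly_open_in_ball u a W ->
  W !=set0 ->
  2 / 3 <= read_diam u a W.
Proof.
case=> _ _ [a_incr a_gt0] u_supp u_l1.
exact: (@read_diam_weakly_open_ge R u a (ltn_increasing_pos a_incr a_gt0) u_supp u_l1 W).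
Qed.
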